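(* Let $G=(V,E)$ be a network and consider a rate-$\omega$ LNEC code over a finite field $\mathbb{F}$ on $G$, as in the context. Let $t$ be a sink node with $C_t\ge\omega$ and $r$ a nonnegative integer with $r\le C_t-\omega$. Then the following three conditions are equivalent: (i) $\Phi(t)\cap\Delta(t,\xi)=\{0\}$ for all $\xi\in\mathcal{E}_t(r)$; (ii) $\Phi(t)\cap\Delta(t,\xi)=\{0\}$ for all $\xi\in\mathcal{A}_t(r)$; (iii) $\Phi(t)\cap\Delta(t,\xi)=\{0\}$ for all $\xi\in\mathcal{H}(r)$.
   Context: Network: $G=(V,E)$ is a finite directed acyclic graph (parallel edges allowed) with a single source node $s$ and a set of sink nodes $T\subseteq V\setminus\{s\}$; $s$ has no incoming edges and sink nodes have no outgoing edges. For an edge $e$, $\mathrm{tail}(e)$, $\mathrm{head}(e)$ are its tail and head; $\mathrm{In}(v)$, $\mathrm{Out}(v)$ are the incoming/outgoing edge sets of node $v$. A directed path is a sequence of edges $(e_1,\dots,e_m)$, $m\ge1$, with $\mathrm{tail}(e_{k+1})=\mathrm{head}(e_k)$. A cut separating node $v$ from node $u$ is a set of edges whose removal leaves no directed path from $u$ to $v$; $C_t$ is the minimum size of a cut separating sink $t$ from $s$. LNEC code: with rate $\omega\ge1$ and finite field $\mathbb{F}$, introduce imaginary source edges $d_1',\dots,d_\omega'$ ending at $s$ with $\mathrm{In}(s)=\{d_1',\dots,d_\omega'\}$, and for each $e\in E$ an imaginary error edge $e'$ with head $\mathrm{tail}(e)$; $E'=\{e':e\in E\}$ (for non-source nodes,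 $\mathrm{In}(v)$ contains only edges of $E$). The code is given by local encoding coefficients $k_{d,e}\in\mathbb{F}$ for $e\in E$, $d\in\mathrm{In}(\mathrm{tail}(e))$. Extended global encoding kernels are vectors in $\mathbb{F}^{\omega+|E|}$ indexed by $\{d_i'\}\cup E'$: $\tilde f_{d_i'}=1_{d_i'}$, $\tilde f_{e'}=1_{e'}$ (standard basis vectors), and recursively in topological order $\tilde f_e=\sum_{d\in\mathrm{In}(\mathrm{tail}(e))}k_{d,e}\tilde f_d+1_{e'}$. For sink $t$, $\mathrm{row}_t(d')=(\tilde f_{\hat e}(d'):\hat e\in\mathrm{In}(t))$. Message space $\Phi(t)=\langle\mathrm{row}_t(d_i'):1\le i\le\omega\rangle$; error space of $\xi\subseteq E$: $\Delta(t,\xi)=\langle\mathrm{row}_t(e'):e\in\xi\rangle$. Graph notions: for $\xi\subseteq E$ and a node $u$, $A\subseteq E$ is a cut separating $u$ from $\xi$ if every directed path in $G$ whose first edge lies in $\xi$ and whose last edge has head $u$ contains an edge of $A$. $\mathrm{mincut}(\xi,u)$ is the minimum size of such a cut. A minimum cut separating $u$ from $\xi$ is primary if it separates $u$ from every minimum cut separating $u$ from $\xi$; it exists and is unique. $\xi$ is primary for $u$ if $\xi$ is the primary minimum cut separating $u$ from $\xi$. For sink $t$ and integer $r\ge0$: $\mathcal{E}_t(r)=\{\xi\subseteq E:\mathrm{mincut}(\xi,t)\le r\}$, $\mathcal{A}_t(r)=\{\xi\subseteq E:|\xi|=r,\ \xi\text{ primary for }t\}$, $\mathcal{H}(r)=\{\xi\subseteq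 E:|\xi|\le r\}$. *)

From HB Require Import structures.
From mathcomp Require Import all_boot all_order all_algebra.
From mathcomp Require Import boolp.
Set Implicit Arguments. Unset Strict Implicit. Unset Printing Implicit Defensive.
Import GRing.Theory.
Local Open Scope ring_scope.

(* Network: nodes of a finType V; edges are 'I_m (parallel edges allowed),
   each edge e has tail (tl e) and head (hd e). *)

Definition adj (V : finType) (m : nat) (tl hd : 'I_m -> V) : rel 'I_m :=
  fun d e => hd d == tl e.

(* A directed path is represented as a nonempty sequence  e :: p  of edges
   with path (adj tl hd) e p; its first edge is e, its last edge is last e p. *)

Definition acyclic (V : finType) (m : nat) (tl hd : 'I_m -> V) : Prop :=
  forall (e : 'I_m) (p : seq 'I_m),
    path (adj tl hd) e p -> hd (last e p) != tl e.

Definition network (V : finType) (m : nat) (tl hd : 'I_m -> V)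
    (s : V) (T : {set V}) : Prop :=
  [/\ acyclic tl hd,
      (forall e, hd e != s),
      (forall v, v != s -> exists e, hd e == v),
      s \notin T &
      (forall t, t \in T -> forall e, tl e != t)].

Definition sep_nodes (V : finType) (m : nat) (tl hd : 'I_m -> V)
    (A : {set 'I_m}) (u v : V) : Prop :=
  forall (e : 'I_m) (p : seq 'I_m),
    path (adj tl hd) e p -> tl e = u -> hd (last e p) = v ->
    has (mem A) (e :: p).

(* C_t : minimum size of a cut separating t from s (setT is always a cut,
   so the minimum over the finite nonempty family is attained; default m) *)
Definition Ct (V : finType) (m : nat) (tl hd : 'I_m -> V) (s t : V) : nat :=
  \big[minn/m]_(A : {set 'I_m} | `[< sep_nodes tl hd A s t >]) #|A|.

Definition sep_edges (V : finType) (m : nat) (tl hd : 'I_m -> V)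
    (A xi : {set 'I_m}) (u : V) : Prop :=
  forall (e : 'I_m) (p : seq 'I_m),
    path (adj tl hd) e p -> e \in xi -> hd (last e p) = u ->
    has (mem A) (e :: p).

(* mincut(xi, u) (xi itself is a cut, so the default m is never reached
   below #|xi|) *)
Definition mincut (V : finType) (m : nat) (tl hd : 'I_m -> V)
    (xi : {set 'I_m}) (u : V) : nat :=
  \big[minn/m]_(A : {set 'I_m} | `[< sep_edges tl hd A xi u >]) #|A|.

Definition is_min_cut (V : finType) (m : nat) (tl hd : 'I_m -> V)
    (A xi : {set 'I_m}) (u : V) : Prop :=
  sep_edges tl hd A xi u /\ #|A| = mincut tl hd xi u.

Definition primary_cut (V : finType) (m : nat) (tl hd : 'I_m -> V)
    (A xi : {set 'I_m}) (u : V) : Prop :=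
  is_min_cut tl hd A xi u /\
  (forall B, is_min_cut tl hd B xi u -> sep_edges tl hd A B u).

Definition primary_for (V : finType) (m : nat) (tl hd : 'I_m -> V)
    (xi : {set 'I_m}) (u : V) : Prop :=
  primary_cut tl hd xi xi u.

(* Coordinates of extended kernels: 'I_(w + m); lshift m i is d_i',
   rshift w e is e'.  Local coefficients: kS i e = k_{d_i', e} (used when
   tail e = s), kE d e = k_{d, e} (used when head d = tail e). *)

Definition unitv (F : fieldType) (n : nat) (x : 'I_n) : 'rV[F]_n :=
  delta_mx 0 x.

Definition kernel_step (F : fieldType) (V : finType) (m w : nat)
    (tl hd : 'I_m -> V) (s : V) (kS : 'I_w -> 'I_m -> F)
    (kE : 'I_m -> 'I_m -> F) (g : 'I_m -> 'rV[F]_(w + m)) :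
    'I_m -> 'rV[F]_(w + m) :=
  fun e =>
    (if tl e == s then \sum_(i < w) kS i e *: unitv F (lshift m i)
     else \sum_(d < m | hd d == tl e) kE d e *: g d)
    + unitv F (rshift w e).

(* Extended global encoding kernels \tilde f_e.  On an acyclic graph the
   recursion (in topological order) is reached after m iterations
   (every directed path has at most m edges). *)
Definition gkernel (F : fieldType) (V : finType) (m w : nat)
    (tl hd : 'I_m -> V) (s : V) (kS : 'I_w -> 'I_m -> F)
    (kE : 'I_m -> 'I_m -> F) : 'I_m -> 'rV[F]_(w + m) :=
  iter m (kernel_step tl hd s kS kE) (fun _ => 0).

(* row_t(x) for an imaginary edge x, as a vector indexed by all edges, with
   zero entries outside In(t) *)
Definition row_t (F : fieldType) (V : finType) (m w : nat)
    (tl hd : 'I_m -> V) (s : V) (kS : 'I_w -> 'I_m -> F)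
    (kE : 'I_m -> 'I_m -> F) (t : V) (x : 'I_(w + m)) : 'rV[F]_m :=
  \row_(e < m) (if hd e == t then gkernel tl hd s kS kE e 0 x else 0).

(* message space Phi(t): row space of the rows row_t(d_i') *)
Definition Phi (F : fieldType) (V : finType) (m w : nat)
    (tl hd : 'I_m -> V) (s : V) (kS : 'I_w -> 'I_m -> F)
    (kE : 'I_m -> 'I_m -> F) (t : V) : 'M[F]_(w, m) :=
  \matrix_(i < w) row_t tl hd s kS kE t (lshift m i).

(* error space Delta(t, xi): row space of the rows row_t(e'), e in xi *)
Definition Delta (F : fieldType) (V : finType) (m w : nat)
    (tl hd : 'I_m -> V) (s : V) (kS : 'I_w -> 'I_m -> F)
    (kE : 'I_m -> 'I_m -> F) (t : V) (xi : {set 'I_m}) : 'M[F]_(m, m) :=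
  \matrix_(j < m) (if j \in xi then row_t tl hd s kS kE t (rshift w j) else 0).

Definition trivial_int (F : fieldType) (V : finType) (m w : nat)
    (tl hd : 'I_m -> V) (s : V) (kS : 'I_w -> 'I_m -> F)
    (kE : 'I_m -> 'I_m -> F) (t : V) (xi : {set 'I_m}) : Prop :=
  (Phi tl hd s kS kE t :&: Delta tl hd s kS kE t xi <= (0 : 'M[F]_m))%MS.

From HB Require Import structures.
From mathcomp Require Import all_boot all_order all_algebra.
From mathcomp Require Import boolp.
Set Implicit Arguments. Unset Strict Implicit. Unset Printing Implicit Defensive.
Import Order.TTheory GRing.Theory.

(* The e'-coordinates of the global kernels solve a linear recurrence along
   the DAG, driven by an impulse at e.  If eta separates t from xi, then solving
   with the edges of eta made inert leaves nothing on In(t), so each row_t(e'),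
   e in xi, is a combination of the rows row_t(a'), a in eta; hence
   Delta(t, xi) <= Delta(t, eta) and decoding xi is no harder than decoding eta.
   Every xi with mincut(xi, t) <= r is separated from t by a primary cut of size
   exactly r: enlarge xi one edge at a time until its mincut reaches r (possible
   as r <= C_t <= mincut(E, t)), and take a suitable minimum cut of the result.
   Primary cuts of size r lie in both H(r) and E_t(r), which closes the cycle
   of implications. *)

Section Cuts.

Variables (V : finType) (m : nat) (tl hd : 'I_m -> V).
Implicit Types (A B X Y Z : {set 'I_m}) (u : V).

Lemma sep_edges_sub A X u : X \subset A -> sep_edges tl hd A X u.
Proof. by move=> /subsetP sXA e p _ eX _ /=; rewrite sXA. Qed.

Lemma sep_edges_refl X u : sep_edges tl hd X X u.
Proof. exact: sep_edges_sub. Qed.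

Lemma sep_edges_trans Z X Y u :
  sep_edges tl hd Z X u -> sep_edges tl hd X Y u -> sep_edges tl hd Z Y u.
Proof.
move=> sepZ sepX e p ep eY lastu.
have /hasP[x] := sepX e p ep eY lastu; rewrite in_cons => /predU1P[-> | xp] xX.
  exact: sepZ.
case/splitPr: xp ep lastu => p1 p2.
rewrite cat_path last_cat => /and3P[_ _ xp2] lastu.
by rewrite /= has_cat (sepZ x p2) ?orbT.
Qed.

Lemma mincut_le_cut A X u : sep_edges tl hd A X u -> mincut tl hd X u <= #|A|.
Proof.
move=> sepA.
exact: (@bigmin_le_cond _ nat _ m A (fun B => `[< sep_edges tl hd B X u >]) _
          (asboolT sepA)).
Qed.

Lemma mincut_le_card X u : mincut tl hd X u <= #|X|.
Proof. exact/mincut_le_cut/sep_edges_refl. Qed.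

Lemma exists_min_cut X u : exists A, is_min_cut tl hd A X u.
Proof.
have le_m A : #|A| <= m by exact: leq_trans (max_card _) (eq_leq (card_ord m)).
rewrite /is_min_cut /mincut -minEnat.
have [|A /asboolP sepA ->] := @eq_bigmin _ nat _ m setT
  (fun A => `[< sep_edges tl hd A X u >]) (fun A => #|A|) _ (fun A _ => le_m A).
  exact/asboolT/sep_edges_sub/subsetT.
by exists A.
Qed.

Lemma min_cut_mincut A X u : is_min_cut tl hd A X u -> mincut tl hd A u = #|A|.
Proof.
move=> [sepA cardA]; apply/eqP; rewrite eqn_leq mincut_le_card /=.
have [C [sepC <-]] := exists_min_cut A u.
by rewrite cardA; apply/mincut_le_cut/(sep_edges_trans sepC).
Qed.

Lemma mincut_setU1 e X u : mincut tl hd (e |: X) u <= (mincut tl hd X u).+1.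
Proof.
have [C [sepC <-]] := exists_min_cut X u.
apply: leq_trans (mincut_le_cut (A := e |: C) _) _; last first.
  by rewrite cardsU1; case: (e \in C).
move=> d p dp /setU1P[-> _ | dX lastu]; first by rewrite /= setU11.
by apply: sub_has (sepC d p dp dX lastu) => x; apply: setU1r.
Qed.

(* Discrete intermediate values along X, X + e_1, ..., setT, using
   mincut_setU1. *)
Lemma exists_superset_mincut r X u :
  mincut tl hd X u <= r <= mincut tl hd setT u ->
  exists2 Y : {set 'I_m}, X \subset Y & mincut tl hd Y u = r.
Proof.
have -> : setT = X :|: [set:: enum 'I_m].
  by apply/setP => x; rewrite !inE mem_enum orbT.
elim: (enum 'I_m) X => [|e s IHs] X.
  rewrite set_nil setU0 => leXr.
  by exists X; [exact: subxx | apply/eqP; rewrite eqn_leq].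
case: (ltngtP (mincut tl hd X u) r) => [ltXr /andP[_ lerT] | // | eqXr _].
- have [|Y sXY cutY] := IHs (e |: X).
    rewrite (leq_trans (mincut_setU1 _ _ _)) //=.
    by rewrite set_cons setUCA setUA in lerT.
  by exists Y => //; apply: subset_trans sXY; apply: subsetUr.
- by exists X; first exact: subxx.
Qed.

(* Call a cut a candidate if it has size r and mincut r and separates u from
   X.  Take a candidate eta cutting off the most candidates.  A minimum cut B
   of eta is a candidate cutting off all that eta does, so by maximality
   exactly the same ones; as B cuts off itself, eta separates u from B. *)
Lemma exists_primary_cut r X u :
  mincut tl hd X u <= r <= mincut tl hd setT u ->
  exists eta : {set 'I_m},
    [/\ #|eta| = r, primary_for tl hd eta u & sep_edges tl hd eta X u].
Proof.
move=> /exists_superset_mincut[Y sXY cutY].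
pose cand Z := [/\ #|Z| = r, mincut tl hd Z u = r & sep_edges tl hd Z X u].
have min_cut_cand A Z : is_min_cut tl hd A Z u -> mincut tl hd Z u = r ->
    sep_edges tl hd Z X u -> cand A.
  move=> minA cutZ sepZ; have [sepA cardA] := minA.
  split; [by rewrite cardA | by rewrite (min_cut_mincut minA) cardA | ].
  exact: sep_edges_trans sepA sepZ.
pose behind Z := [set A | `[< cand A >] && `[< sep_edges tl hd Z A u >]].
have [P minP] := exists_min_cut Y u.
have candP : `[< cand P >].
  exact/asboolT/(min_cut_cand _ _ minP cutY)/(@sep_edges_sub Y X u sXY).
case: (@arg_maxnP _ P (fun Z => `[< cand Z >]) (fun Z => #|behind Z|) candP).
move=> eta /asboolP candEta maxEta.
have [cardEta cutEta sepEta] := candEta.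
exists eta; split=> //; split=> [|B minB].
  by split; [exact: sep_edges_refl | rewrite cutEta].
have candB := min_cut_cand _ _ minB cutEta sepEta.
have sub_behind : behind eta \subset behind B.
  apply/subsetP => A; rewrite !inE => /andP[-> /asboolP sepA].
  exact/asboolT/(sep_edges_trans minB.1).
have /subsetP behind_sub : behind B \subset behind eta.
  rewrite -(subset_leqif_card sub_behind).2 eqn_leq subset_leq_card //=.
  exact/maxEta/asboolT.
have : B \in behind B.
  by rewrite inE; apply/andP; split; apply/asboolT => //; exact: sep_edges_refl.
by move/behind_sub; rewrite inE => /andP[_ /asboolP].
Qed.

Lemma Ct_le_mincut_setT s t : Ct tl hd s t <= mincut tl hd setT t.
Proof.
have [A [sepA <-]] := exists_min_cut setT t.
have cutA : sep_nodes tl hd A s t.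
  by move=> e p ep _ lastt; apply: sepA; rewrite ?inE.
exact: (@bigmin_le_cond _ nat _ m A (fun B => `[< sep_nodes tl hd B s t >]) _
          (asboolT cutA)).
Qed.

End Cuts.

Section EdgeRecurrence.

Variables (F : fieldType) (V : finType) (m : nat) (tl hd : 'I_m -> V).
Implicit Types (K : 'I_m -> 'I_m -> F) (b f : 'I_m -> F) (eta : {set 'I_m}).
Local Open Scope ring_scope.

Definition propagate K f : 'I_m -> F :=
  fun d => \sum_(c < m | hd c == tl d) K c d * f c.

Definition recur K b f : 'I_m -> F := fun d => b d + propagate K f d.

Definition solution K b : 'I_m -> F := iter m (recur K b) (fun=> 0).

Definition delta (a : 'I_m) : 'I_m -> F := fun d => (d == a)%:R.

Definition mask eta f : 'I_m -> F := fun d => if d \in eta then 0 else f d.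

Lemma propagate_lincomb K f (x : 'I_m -> F) (g : 'I_m -> 'I_m -> F) eta d :
  propagate K (fun c => f c + \sum_(a in eta) x a * g a c) d =
  propagate K f d + \sum_(a in eta) x a * propagate K (g a) d.
Proof.
rewrite /propagate; under eq_bigr do rewrite mulrDr mulr_sumr.
rewrite big_split /= exchange_big; congr (_ + _); apply: eq_bigr => a _.
by rewrite mulr_sumr; apply: eq_bigr => c _; rewrite mulrCA.
Qed.

Lemma iter_propagate_eq0 K f n d :
  (forall e p, path (adj tl hd) e p -> last e p = d -> size p < n)%N ->
  iter n (propagate K) f d = 0.
Proof.
elim: n d => [|n IHn] d short_paths; first by have := short_paths d [::] isT erefl.
rewrite /= /propagate big1 // => c /eqP adj_cd; rewrite IHn ?mulr0 // => e p ep lastc.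
rewrite -ltnS -(size_rcons p d); apply: (short_paths e); last exact: last_rcons.
by rewrite rcons_path ep lastc /adj adj_cd /=.
Qed.

Lemma iter_recurS K b n d :
  iter n.+1 (recur K b) (fun=> 0) d - iter n (recur K b) (fun=> 0) d =
  iter n (propagate K) b d.
Proof.
elim: n d => [|n IHn] d.
  by rewrite /= /recur /propagate big1 ?addr0 ?subr0 // => c _; rewrite mulr0.
rewrite [LHS]/= /recur opprD addrACA subrr add0r /propagate -sumrB.
by apply: eq_bigr => c _; rewrite -mulrBr IHn.
Qed.

Lemma recur_mask K b eta f d :
  recur (fun c => mask eta (K c)) (mask eta b) f d = mask eta (recur K b f) d.
Proof.
rewrite /recur /mask /propagate; case: ifP => // _.
by rewrite add0r big1 // => c _; rewrite mul0r.
Qed.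

Lemma sum_delta eta (x : 'I_m -> F) d :
  \sum_(a in eta) x a * delta a d = x d - mask eta x d.
Proof.
rewrite /mask /delta; case: ifPn => [d_in | d_notin].
  rewrite subr0 (bigD1 d) //= eqxx mulr1 big1 ?addr0 // => a /andP[_ a_neq_d].
  by rewrite eq_sym (negbTE a_neq_d) mulr0.
rewrite subrr big1 // => a a_in; case: eqP => [d_eq_a | _]; last by rewrite mulr0.
by move: d_notin; rewrite d_eq_a a_in.
Qed.

Lemma solution_eq0_on K b (D : 'I_m -> Prop) :
  (forall d, D d -> b d = 0) ->
  (forall c d, D d -> hd c = tl d -> K c d = 0 \/ D c) ->
  forall d, D d -> solution K b d = 0.
Proof.
move=> b_eq0 closedD; suff iter_eq0 n d : D d -> iter n (recur K b) (fun=> 0) d = 0.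
  by move=> d; apply: iter_eq0.
elim: n d => [//|n IHn] d Dd /=.
rewrite /recur /propagate b_eq0 // add0r big1 // => c /eqP adj_cd.
by case: (closedD c d Dd adj_cd) => [-> | /IHn ->]; rewrite ?mul0r ?mulr0.
Qed.

Lemma masked_solution_eq0 K eta e d :
  (forall p, path (adj tl hd) e p -> last e p = d -> has (mem eta) (e :: p)) ->
  solution (fun c => mask eta (K c)) (mask eta (delta e)) d = 0.
Proof.
move: d; apply: solution_eq0_on => [d | c d] cut_d; rewrite /mask.
  case: ifPn => // d_notin; rewrite /delta.
  case: eqP d_notin cut_d => // -> e_notin cut_e.
  by have := cut_e [::] isT erefl; rewrite /= orbF (negbTE e_notin).
case: ifPn => [_ | d_notin] adj_cd; [by left | right] => p ep last_c.
have := cut_d (rcons p d); rewrite rcons_path ep last_c /adj adj_cd eqxx last_rcons.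
by move=> /(_ isT erefl); rewrite -rcons_cons has_rcons /= (negbTE d_notin).
Qed.

Section Acyclic.

Hypothesis acyclic_G : acyclic tl hd.

Lemma acyclic_path_uniq e p : path (adj tl hd) e p -> uniq (e :: p).
Proof.
elim: p e => [//|x p IHp] e /= /andP[ex xp]; have /= /andP[-> ->] := IHp x xp.
rewrite !andbT; apply/negP => e_in.
have : path (adj tl hd) e (x :: p) by rewrite /= ex.
case/splitPr: e_in => p1 p2; rewrite cat_path /= => /and3P[ep1 back_to_e _].
by rewrite /adj (negbTE (acyclic_G ep1)) in back_to_e.
Qed.

Lemma acyclic_path_size e p : path (adj tl hd) e p -> (size p < m)%N.
Proof.
move/acyclic_path_uniq/card_uniqP => card_ep.
change (size (e :: p) <= m)%N; rewrite -card_ep.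
exact: leq_trans (max_card _) (eq_leq (card_ord m)).
Qed.

Lemma iter_propagate_nilpotent K f d : iter m (propagate K) f d = 0.
Proof. by apply: iter_propagate_eq0 => e p /acyclic_path_size. Qed.

Lemma solutionE K b d : solution K b d = recur K b (solution K b) d.
Proof.
apply/eqP; rewrite eq_sym -subr_eq0.
by rewrite -[recur _ _ _ _]/(iter m.+1 _ _ _) iter_recurS iter_propagate_nilpotent.
Qed.

Lemma solution_unique K b f : (forall d, f d = recur K b f d) -> f =1 solution K b.
Proof.
move=> f_fix; pose g d := f d - solution K b d.
have g_fix d : g d = propagate K g d.
  rewrite /g f_fix solutionE /recur opprD addrACA subrr add0r /propagate -sumrB.
  by apply: eq_bigr => c _; rewrite -mulrBr.
have g_iter n d : g d = iter n (propagate K) g d.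
  elim: n d => [//|n IHn] d /=; rewrite g_fix.
  by apply: eq_bigr => c _; rewrite -IHn.
move=> d; apply/eqP.
by rewrite -subr_eq0 -/(g d) (g_iter m) iter_propagate_nilpotent.
Qed.

(* [h] solves the recurrence with the edges of eta made inert; restoring them
   adds, for each a in eta, the response to an impulse at a, weighted by the
   value [recur K b h a] that [h] feeds into a. *)
Lemma solution_split K b eta d :
  let h := solution (fun c => mask eta (K c)) (mask eta b) in
  solution K b d = h d + \sum_(a in eta) recur K b h a * solution K (delta a) d.
Proof.
move=> h; set S := recur K b h; symmetry; move: d; apply: solution_unique => d.
have hE c : h c = mask eta S c by rewrite [LHS]solutionE recur_mask.
have deltaE a c :
    propagate K (solution K (delta a)) c = solution K (delta a) c - delta a c.
  by rewrite [solution K _ c]solutionE /recur addrC addKr.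
rewrite /recur propagate_lincomb addrA -/(recur K b h d) -/S.
under [X in _ = _ + X]eq_bigr do rewrite deltaE mulrBr.
by rewrite sumrB sum_delta hE opprB addrCA [S d + _]addrCA subrr addr0 addrC.
Qed.

Lemma solution_delta_cut K eta xi t e :
  sep_edges tl hd eta xi t -> e \in xi ->
  exists x : 'I_m -> F, forall d, hd d = t ->
    solution K (delta e) d = \sum_(a in eta) x a * solution K (delta a) d.
Proof.
move=> sep_eta e_xi.
exists (recur K (delta e) (solution (fun c => mask eta (K c)) (mask eta (delta e)))).
move=> d hd_t; rewrite (solution_split _ _ eta) masked_solution_eq0 ?add0r //.
by move=> p ep last_d; apply: sep_eta; rewrite ?last_d.
Qed.

End Acyclic.

End EdgeRecurrence.

Section LinearCode.

Variables (F : fieldType) (V : finType) (m w : nat) (tl hd : 'I_m -> V) (s : V).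
Variables (kS : 'I_w -> 'I_m -> F) (kE : 'I_m -> 'I_m -> F).
Implicit Types (eta xi : {set 'I_m}).
Local Open Scope ring_scope.

(* On edges leaving s the kernel step reads only the source coordinates d_i',
   so they receive no e'-coordinate from upstream. *)
Definition error_coef : 'I_m -> 'I_m -> F :=
  fun c d => if tl d == s then 0 else kE c d.

Lemma gkernel_error_coord e d :
  gkernel tl hd s kS kE d 0 (rshift w e) = solution tl hd error_coef (delta F e) d.
Proof.
suff iterE n : iter n (kernel_step tl hd s kS kE) (fun=> 0) d 0 (rshift w e) =
               iter n (recur tl hd error_coef (delta F e)) (fun=> 0) d.
  exact: iterE.
elim: n d => [|n IHn] d; first by rewrite /= mxE.
rewrite [LHS]/= [RHS]/= /kernel_step /recur /propagate /error_coef /delta.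
rewrite mxE addrC /unitv mxE eqxx eq_rshift /= eq_sym; congr (_ + _).
case: (tl d == s).
  rewrite summxE big1; last by move=> i _; rewrite !mxE eq_rlshift andbF mulr0.
  by rewrite big1 // => c _; rewrite mul0r.
by rewrite summxE; apply: eq_bigr => c _; rewrite !mxE IHn.
Qed.

Lemma sep_edges_Delta_sub t eta xi : acyclic tl hd -> sep_edges tl hd eta xi t ->
  (Delta tl hd s kS kE t xi <= Delta tl hd s kS kE t eta)%MS.
Proof.
move=> acyclic_G sep_eta; apply/row_subP => j; rewrite rowK.
case: ifP => j_xi; last exact: sub0mx.
have [x decomp] := solution_delta_cut acyclic_G error_coef sep_eta j_xi.
have -> : row_t tl hd s kS kE t (rshift w j) =
    \sum_(a in eta) x a *: row_t tl hd s kS kE t (rshift w a).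
  apply/rowP => d; rewrite !mxE summxE; case: (eqVneq (hd d) t) => [hd_t | hd_nt].
    rewrite gkernel_error_coord decomp //; apply: eq_bigr => a _.
    by rewrite !mxE hd_t eqxx gkernel_error_coord.
  by rewrite big1 // => a _; rewrite !mxE (negbTE hd_nt) mulr0.
apply: summx_sub => a a_eta; apply: scalemx_sub.
by have := row_sub a (Delta tl hd s kS kE t eta); rewrite rowK a_eta.
Qed.

Lemma sep_edges_trivial_int t eta xi :
  acyclic tl hd -> sep_edges tl hd eta xi t ->
  trivial_int tl hd s kS kE t eta -> trivial_int tl hd s kS kE t xi.
Proof.
move=> acyclic_G sep_eta; apply/submx_trans/capmxS => //.
exact: sep_edges_Delta_sub.
Qed.

Lemma primary_trivial_int t r : acyclic tl hd -> (r <= mincut tl hd setT t)%N ->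
  (forall eta, #|eta| = r -> primary_for tl hd eta t ->
     trivial_int tl hd s kS kE t eta) ->
  forall xi, (mincut tl hd xi t <= r)%N -> trivial_int tl hd s kS kE t xi.
Proof.
move=> acyclic_G le_r_cutT trivial_primary xi le_xi_r.
have /exists_primary_cut[eta [card_eta primary_eta sep_eta]] :
    (mincut tl hd xi t <= r <= mincut tl hd setT t)%N by rewrite le_xi_r.
exact: sep_edges_trivial_int acyclic_G sep_eta (trivial_primary _ card_eta primary_eta).
Qed.

End LinearCode.

Theorem corollary10 (F : finFieldType) (V : finType) (m : nat)
    (tl hd : 'I_m -> V) (s : V) (T : {set V}) (w : nat)
    (kS : 'I_w -> 'I_m -> F) (kE : 'I_m -> 'I_m -> F) (t : V) (r : nat) :
  network tl hd s T -> 0 < w -> t \in T ->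
  w <= Ct tl hd s t -> r <= Ct tl hd s t - w ->
  [<-> (forall xi : {set 'I_m}, mincut tl hd xi t <= r ->
          trivial_int tl hd s kS kE t xi);
       (forall xi : {set 'I_m}, #|xi| = r -> primary_for tl hd xi t ->
          trivial_int tl hd s kS kE t xi);
       (forall xi : {set 'I_m}, #|xi| <= r ->
          trivial_int tl hd s kS kE t xi)].
Proof.
move=> [acyclic_G _ _ _ _] _ _ _ le_r_Ct.
have le_r_cutT : r <= mincut tl hd setT t.
  exact: leq_trans (leq_trans le_r_Ct (leq_subr _ _)) (Ct_le_mincut_setT _ _ _ _).
tfae.
- move=> trivial_mincut xi card_xi _; apply: trivial_mincut.
  by rewrite -card_xi mincut_le_card.
- move=> trivial_primary xi le_xi_r.
  apply: primary_trivial_int acyclic_G le_r_cutT trivial_primary _ _.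
  exact: leq_trans (mincut_le_card _ _ _ _) le_xi_r.
- move=> trivial_small; apply: primary_trivial_int acyclic_G le_r_cutT _.
  by move=> eta card_eta _; apply: trivial_small; rewrite card_eta.
Qed.
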